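(* Let $M=T^*Q$ be the phase space of the complexified planar Kepler problem with symplectic form $\omega=dx_1\wedge dy_1+dx_2\wedge dy_2$ and functions $\xi_1,c_1,c_2,c_3,c_4$ as in the context. Let $V=\{p\in M: c_2(p)+ic_3(p)\neq 0\}$, on which $(\xi_1,c_1,c_3,c_4)$ serve as local coordinates. Then \[\omega|_V=\left(\Big(\frac{i}{c_1}-\frac{c_3}{c_1(c_2+ic_3)}\Big)dc_1-\frac{i}{\xi_1}d\xi_1\right)\wedge dc_3+\frac{c_1}{c_2+ic_3}\,dc_1\wedge dc_4.\]
   Context: Let $U=\{(x_1,x_2)\in\mathbb{C}^2: x_1^2+x_2^2\neq 0\}$ and write $\xi_1=x_1+ix_2$, $\xi_2=x_1-ix_2$, so $\xi_1\xi_2=x_1^2+x_2^2\neq0$ on $U$. Take two copies $Q_I,Q_{II}$ of $U$. For each fixed $\xi_2\neq 0$, cut both $\xi_1$-slices $\mathbb{C}\setminus\{0\}$ along the half-line $\{\xi_1=t\xi_2^{-1}: t<0\}$ and glue them crosswise (upper edge of sheet $I$ to lower edge of sheet $II$ and vice versa), as for the Riemann surface of a square root; letting $\xi_2$ vary gives a complex $2$-manifold $Q$, whose points are written $(\xi_1,\xi_2)_k$, $k\in\{I,II\}$. Define $c_1=\sqrt{\xi_1\xi_2}$ (principal branch, argument in $(-\pi/2,\pi/2]$) on $Q_I$ and $c_1=-\sqrt{\xi_1\xi_2}$ on $Q_{II}$, a holomorphic square root of $x_1^2+x_2^2$ on $Q$. The phase space is $M=T^*Q\cong Q\times\mathbb{C}^2$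 with fiber coordinates $(y_1,y_2)$; set $\eta_1=y_1+iy_2$, $\eta_2=y_1-iy_2$, and $c_2=\xi_1\eta_2$, $c_3=\frac{i}{2}(\xi_1\eta_2-\xi_2\eta_1)=x_1y_2-x_2y_1$ (angular momentum), $c_4=\frac12\eta_1\eta_2-\frac1{c_1}=\frac12(y_1^2+y_2^2)-\frac1{c_1}$ (Kepler Hamiltonian). These satisfy $2c_4c_1^2+2c_1=c_2^2+2ic_3c_2$. *)

From HB Require Import structures.
From mathcomp Require Import all_boot all_order all_algebra.
From mathcomp Require Import all_classical all_reals all_analysis.
From mathcomp Require Import complex.
Set Implicit Arguments. Unset Strict Implicit. Unset Printing Implicit Defensive.
Import Order.TTheory GRing.Theory Num.Theory.
Import numFieldNormedType.Exports.
Local Open Scope ring_scope.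
Local Open Scope complex_scope.

Definition Cx (R : realType) : numClosedFieldType := R[i].

Section Kepler.
Variable R : realType.
Local Notation K := (Cx R).

(* phase-space points p = ((x1, x2), (y1, y2)) *)
Definition xi1 (p : (K * K) * (K * K)) : K := p.1.1 + 'i * p.1.2.
Definition xi2 (p : (K * K) * (K * K)) : K := p.1.1 - 'i * p.1.2.
Definition eta1 (p : (K * K) * (K * K)) : K := p.2.1 + 'i * p.2.2.
Definition eta2 (p : (K * K) * (K * K)) : K := p.2.1 - 'i * p.2.2.
(* c1 on M, given a (local holomorphic) square root c1q of x1^2+x2^2 on Q *)
Definition C1 (c1q : K * K -> K) (p : (K * K) * (K * K)) : K := c1q p.1.
Definition C2 (p : (K * K) * (K * K)) : K := xi1 p * eta2 p.
Definition C3 (p : (K * K) * (K * K)) : K := p.1.1 * p.2.2 - p.1.2 * p.2.1.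
Definition C4 (c1q : K * K -> K) (p : (K * K) * (K * K)) : K :=
  (p.2.1 ^+ 2 + p.2.2 ^+ 2) / 2%:R - (C1 c1q p)^-1.

(* omega = dx1 /\ dy1 + dx2 /\ dy2, evaluated on tangent vectors u v *)
Definition omega (u v : (K * K) * (K * K)) : K :=
  (u.1.1 * v.2.1 - v.1.1 * u.2.1) + (u.1.2 * v.2.2 - v.1.2 * u.2.2).

Definition wedge (a b : (K * K) * (K * K) -> K) (u v : (K * K) * (K * K)) : K :=
  a u * b v - a v * b u.
End Kepler.

(* Each Kepler coordinate has an explicit differential: xi1 is linear, c3 is
   bilinear, differentiating c1^2 = x1^2 + x2^2 gives
   dc1 = (x1 dx1 + x2 dx2) / c1, and dc4 = y1 dy1 + y2 dy2 + c1^-2 dc1.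
   Since moreover c2 + i c3 = x1 y1 + x2 y2, both sides of the identity become
   rational functions of the coordinates, c1 and i, which agree modulo
   i^2 = -1 and c1^2 = x1^2 + x2^2. *)

From HB Require Import structures.
From mathcomp Require Import all_boot all_order all_algebra.
From mathcomp Require Import all_classical all_reals all_analysis.
From mathcomp Require Import complex ring.
Set Implicit Arguments. Unset Strict Implicit. Unset Printing Implicit Defensive.
Import Order.TTheory GRing.Theory Num.Theory.
Import numFieldNormedType.Exports.
Local Open Scope ring_scope.
Local Open Scope complex_scope.

Section ProductProjections.
Context {K : numFieldType} {U V : normedModType K}.

Lemma fst_is_linear : linear (@fst U V). Proof. by []. Qed.
Lemma snd_is_linear : linear (@snd U V). Proof. by []. Qed.

HB.instance Definition _ :=
  GRing.isLinear.Build K (U * V)%type U *:%R fst fst_is_linear.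
HB.instance Definition _ :=
  GRing.isLinear.Build K (U * V)%type V *:%R snd snd_is_linear.

Global Instance is_diff_fst (x : U * V) : is_diff x fst fst.
Proof.
have fst_cont : continuous (@fst U V) by move=> ?; exact: cvg_fst.
by apply: DiffDef; [exact: linear_differentiable | exact: diff_lin].
Qed.

Global Instance is_diff_snd (x : U * V) : is_diff x snd snd.
Proof.
have snd_cont : continuous (@snd U V) by move=> ?; exact: cvg_snd.
by apply: DiffDef; [exact: linear_differentiable | exact: diff_lin].
Qed.
End ProductProjections.

Lemma diff_sqrt (K : numFieldType) (V : normedModType K) (f g df : V -> K) x :
  is_diff x f df -> (\forall z \near x, g z ^+ 2 = f z) ->
  differentiable g x -> g x != 0 ->
  'd g x = (2 * g x)^-1 \*: df :> (V -> K).
Proof.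
move=> f_df g2f g_diff g0; apply/funext => w /=.
have two_g0 : 2 * g x != 0 by rewrite mulf_neq0 ?pnatr_eq0.
have : 'D_w (g ^+ 2) x = 'D_w f x by apply: near_eq_derive; near do rewrite exprfctE.
rewrite deriveE; last exact: differentiableX.
rewrite deriveE; last exact: ex_diff.
rewrite diffX // diff_val /= expr1 => <-.
by rewrite scalerA mulVf ?scale1r.
Unshelve. all: by end_near.
Qed.

Lemma diff_sqrt_sum_sqr (K : numFieldType) (g : K * K -> K) x :
  (\forall z \near x, g z ^+ 2 = z.1 ^+ 2 + z.2 ^+ 2) ->
  differentiable g x -> g x != 0 ->
  'd g x = (fun w => (x.1 * w.1 + x.2 * w.2) / g x) :> (K * K -> K).
Proof.
move=> g2 g_diff g0.
have sum_sqr := is_diffD (is_diffX 1 (is_diff_fst x)) (is_diffX 1 (is_diff_snd x)).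
rewrite (diff_sqrt sum_sqr g2 g_diff g0); apply/funext => w /=.
by rewrite !fctE !expr1 /GRing.scale /=; field.
Qed.

Section KeplerCoordinates.
Variable R : realType.
Local Notation K := (Cx R).
Local Notation M := ((K * K) * (K * K))%type.

Definition x_dot_dx (p w : M) : K := p.1.1 * w.1.1 + p.1.2 * w.1.2.
Definition y_dot_dy (p w : M) : K := p.2.1 * w.2.1 + p.2.2 * w.2.2.
Definition dC3 (p w : M) : K :=
  p.1.1 * w.2.2 + p.2.2 * w.1.1 - (p.1.2 * w.2.1 + p.2.1 * w.1.2).

Lemma xi1_mul_xi2 (p : M) : xi1 p * xi2 p = p.1.1 ^+ 2 + p.1.2 ^+ 2.
Proof. by rewrite /xi1 /xi2; ring: (@sqrCi K). Qed.

Lemma C2_addiC3 (p : M) : C2 p + 'i * C3 p = p.1.1 * p.2.1 + p.1.2 * p.2.2.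
Proof. by rewrite /C2 /C3 /xi1 /eta2; ring: (@sqrCi K). Qed.

Lemma is_diff_x1 (p : M) : is_diff p (fst \o fst) (fst \o fst).
Proof. exact: is_diff_comp. Qed.
Lemma is_diff_x2 (p : M) : is_diff p (snd \o fst) (snd \o fst).
Proof. exact: is_diff_comp. Qed.
Lemma is_diff_y1 (p : M) : is_diff p (fst \o snd) (fst \o snd).
Proof. exact: is_diff_comp. Qed.
Lemma is_diff_y2 (p : M) : is_diff p (snd \o snd) (snd \o snd).
Proof. exact: is_diff_comp. Qed.

Lemma is_diff_xi1 (p : M) : is_diff p (@xi1 R) (@xi1 R).
Proof. exact: is_diffD (is_diff_x1 p) (is_diffZ 'i (is_diff_x2 p)). Qed.

Lemma is_diff_C3 (p : M) : is_diff p (@C3 R) (dC3 p).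
Proof.
exact: is_diffB (is_diffM (is_diff_x1 p) (is_diff_y2 p))
                (is_diffM (is_diff_x2 p) (is_diff_y1 p)).
Qed.

Lemma is_diff_C1 (c1q : K * K -> K) (p : M) :
  (\forall z \near p.1, c1q z ^+ 2 = z.1 ^+ 2 + z.2 ^+ 2) ->
  differentiable c1q p.1 -> C1 c1q p != 0 ->
  is_diff p (C1 c1q) (fun w => x_dot_dx p w / C1 c1q p).
Proof.
move=> c1q_sqr c1q_diff c0.
have := is_diff_comp (is_diff_fst p) (differentiableP c1q_diff).
by rewrite (diff_sqrt_sum_sqr c1q_sqr).
Qed.

Lemma is_diff_C4 (c1q : K * K -> K) (p : M) (dc1 : M -> K) :
  is_diff p (C1 c1q) dc1 -> C1 c1q p != 0 ->
  is_diff p (C4 c1q) (fun w => y_dot_dy p w + C1 c1q p ^- 2 * dc1 w).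
Proof.
move=> C1_dc1 c0.
have -> : C4 c1q = 2^-1 *: ((fst \o snd) ^+ 2 + (snd \o snd) ^+ 2)
                   - (fun q => (C1 c1q q)^-1).
  by apply/funext => q; rewrite /C4 !fctE mulrC.
have inv_C1 : is_diff p (fun q => (C1 c1q q)^-1) (- C1 c1q p ^- 2 \*: dc1).
  by apply: DiffDef; [exact: differentiableV | rewrite diffV // diff_val].
have sum_sqr := is_diffD (is_diffX 1 (is_diff_y1 p)) (is_diffX 1 (is_diff_y2 p)).
apply: is_diff_eq (is_diffB (is_diffZ 2^-1 sum_sqr) inv_C1) _.
apply/funext => w.
by rewrite /y_dot_dy !fctE !expr1 /= /GRing.scale /=; field.
Qed.

Lemma omega_Kepler_coordinates (c : K) (dxi dc1 dc3 dc4 : M -> K) (p u v : M) :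
  c ^+ 2 = p.1.1 ^+ 2 + p.1.2 ^+ 2 -> c != 0 -> xi1 p != 0 ->
  C2 p + 'i * C3 p != 0 ->
  dxi = @xi1 R ->
  dc1 = (fun w => x_dot_dx p w / c) -> dc3 = dC3 p ->
  dc4 = (fun w => y_dot_dy p w + c ^- 2 * (x_dot_dx p w / c)) ->
  omega u v =
    wedge (fun w => ('i / c - C3 p / (c * (C2 p + 'i * C3 p))) * dc1 w
                    - ('i / xi1 p) * dxi w) dc3 u v
    + (c / (C2 p + 'i * C3 p)) * wedge dc1 dc4 u v.
Proof.
move=> c_sqr c0 xi0 D0 -> -> -> ->; rewrite C2_addiC3 in D0 *.
rewrite /omega /wedge /x_dot_dx /y_dot_dy /dC3 /C3 /xi1 /= in xi0 *.
by field: (@sqrCi K) c_sqr; apply/and3P.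
Qed.
End KeplerCoordinates.

Theorem proposition2 (R : realType) (c1q : Cx R * Cx R -> Cx R)
    (p : (Cx R * Cx R) * (Cx R * Cx R)) :
  p.1.1 ^+ 2 + p.1.2 ^+ 2 != 0 ->
  (\forall z \near (p.1 : Cx R * Cx R), c1q z ^+ 2 = z.1 ^+ 2 + z.2 ^+ 2) ->
  differentiable c1q p.1 ->
  C2 p + 'i * C3 p != 0 ->
  forall u v : (Cx R * Cx R) * (Cx R * Cx R),
    omega u v =
      wedge (fun w => ('i / C1 c1q p - C3 p / (C1 c1q p * (C2 p + 'i * C3 p)))
                        * 'd (C1 c1q) p w
                      - ('i / xi1 p) * 'd (@xi1 R) p w)
            ('d (@C3 R) p) u v
      + (C1 c1q p / (C2 p + 'i * C3 p)) * wedge ('d (C1 c1q) p) ('d (C4 c1q) p) u v.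
Proof.
move=> r0 c1q_sqr c1q_diff D0 u v.
have C1_sqr : C1 c1q p ^+ 2 = p.1.1 ^+ 2 + p.1.2 ^+ 2 := nbhs_singleton c1q_sqr.
have C1_neq0 : C1 c1q p != 0.
  by apply: contraNneq r0 => C1_0; rewrite -C1_sqr C1_0 expr0n.
have xi1_neq0 : xi1 p != 0.
  by apply: contraNneq r0 => xi1_0; rewrite -xi1_mul_xi2 xi1_0 mul0r.
have C1_diff := is_diff_C1 c1q_sqr c1q_diff C1_neq0.
apply: (omega_Kepler_coordinates u v C1_sqr C1_neq0 xi1_neq0 D0).
- by case: (is_diff_xi1 p).
- by case: C1_diff.
- by case: (is_diff_C3 p).
- by case: (is_diff_C4 C1_diff C1_neq0).
Qed.
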